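(* Let $f$ be a quadratic rational map. If there exists $k\in\mathbb{N}$ such that $\mathrm{Deck}(f^k)\cong V_4$ (the Klein four-group), then the minimal such $k$ is $k=2$.
   Context: $\mathrm{Deck}(F)=\{\tau \text{ Möbius} : F\circ\tau=F\}$; $f^k$ is the $k$-th iterate. *)

(* The complex plane is [R[i]] (mathcomp-real-closed) for an
   arbitrary [R : realType]; the Riemann sphere is [option R[i]], [None] = oo. *)
From HB Require Import structures.
From mathcomp Require Import all_boot all_order all_algebra.
From mathcomp Require Import complex.
From mathcomp Require Import reals.
Set Implicit Arguments. Unset Strict Implicit. Unset Printing Implicit Defensive.
Import Order.TTheory GRing.Theory Num.Theory.
Local Open Scope ring_scope.

Section Sphere.
Variable R : realType.
Notation C := (R[i]).

Definition sphere := option C.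

(* The map of the sphere z |-> p(z)/q(z) induced by a pair of polynomials
   (intended for coprime p q, not both zero).  At a pole (q(z)=0) the value
   is oo; at oo the value is oo if deg p > deg q, lead p / lead q if
   deg p = deg q, and 0 if deg p < deg q. *)
Definition rat_of (p q : {poly C}) (z : sphere) : sphere :=
  match z with
  | Some w => if q.[w] != 0 then Some (p.[w] / q.[w]) else None
  | None => if (size q < size p)%N then None
            else Some (p`_(size q).-1 / lead_coef q)
  end.

Definition quadratic_rational_map (f : sphere -> sphere) : Prop :=
  exists p q : {poly C},
    [/\ coprimep p q, maxn (size p) (size q) = 3%N & f = rat_of p q].

Definition mobius (t : sphere -> sphere) : Prop :=
  exists a b c d : C,
    a * d - b * c != 0 /\ t = rat_of (a *: 'X + b%:P) (c *: 'X + d%:P).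

Definition Deck (F : sphere -> sphere) : (sphere -> sphere) -> Prop :=
  fun t => mobius t /\ F \o t = F.

Definition deck_klein4 (F : sphere -> sphere) : Prop :=
  exists phi : ('Z_2 * 'Z_2)%type -> (sphere -> sphere),
    [/\ injective phi,
        (forall g, Deck F (phi g)),
        (forall t, Deck F t -> exists g, phi g = t)
      & (forall g h, phi (g + h) = phi g \o phi h)].

End Sphere.

(* Write f = [P : Q] with binary quadratic forms P, Q without common zero and
   F = (P, Q). The identity det(F u, F v) = det(u, v) * det(J u, v), where J is
   the linear map built from the Jacobian of (P, Q) and J^2 = disc * 1, shows
   that the fibres of f are the pairs {z, iota z}, iota being the involution
   induced by J; hence Deck(f) = {id, iota}, which is not V4.  A Mobius map
   s = [S] commuting with iota satisfies S J = +-J S, so P o S and Q o S are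
   again eigenforms of J for the eigenvalue disc, i.e. combinations of P and Q:
   s descends to a Mobius map m with f o s = m o f.
   If Deck(f^k) ~ V4, then k >= 2 and iota lies in this abelian group, so every
   s in it descends to some m in Deck(f^(k-1)); a case analysis in V4 shows
   that m is id or iota, hence f o m = f and s lies in Deck(f^2).  Therefore
   Deck(f^k) = Deck(f^2). *)

From HB Require Import structures.
From mathcomp Require Import all_boot all_order all_algebra.
From mathcomp Require Import complex reals boolp ring.
Set Implicit Arguments. Unset Strict Implicit. Unset Printing Implicit Defensive.
Import GRing.Theory Num.Theory.
Local Open Scope ring_scope.

Section ProjectiveLine.
Variable R : realType.
Local Notation C := (R[i]).

Definition point (v : C * C) : sphere R :=
  if v.2 != 0 then Some (v.1 / v.2) else None.
Definition coords (z : sphere R) : C * C := if z is Some w then (w, 1) else (1, 0).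
Definition nonzero (v : C * C) := (v.1 != 0) || (v.2 != 0).
Definition det2 (u v : C * C) := u.1 * v.2 - u.2 * v.1.
Definition scalev (k : C) (v : C * C) := (k * v.1, k * v.2).
Definition linmap (a b c d : C) (v : C * C) := (a * v.1 + b * v.2, c * v.1 + d * v.2).
Definition mobius_of a b c d (z : sphere R) := point (linmap a b c d (coords z)).

Lemma point_coords z : point (coords z) = z.
Proof. by case: z => [w|]; rewrite /point /= ?oner_eq0 ?divr1 ?eqxx. Qed.

Lemma nonzero_coords z : nonzero (coords z).
Proof. by case: z => [w|]; rewrite /nonzero /= oner_eq0 ?orbT. Qed.

Lemma nonzero_pt1 (t : C) : nonzero (t, 1).
Proof. by rewrite /nonzero /= oner_eq0 orbT. Qed.

Lemma point_eq u v : nonzero u -> nonzero v -> det2 u v = 0 -> point u = point v.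
Proof.
case: u v => [u1 u2] [v1 v2]; rewrite /nonzero /det2 /point /= => nzu nzv /eqP.
rewrite subr_eq0 => /eqP uv.
case: (eqVneq u2 0) => [u20|u20]; case: (eqVneq v2 0) => [v20|v20] //.
- move: uv; rewrite u20 mul0r => /eqP; rewrite mulf_eq0 (negbTE v20) orbF => /eqP u10.
  by move: nzu; rewrite u20 u10 eqxx.
- move: uv; rewrite v20 mulr0 => /esym/eqP; rewrite mulf_eq0 (negbTE u20) => /eqP v10.
  by move: nzv; rewrite v20 v10 eqxx.
- by congr Some; apply/eqP; rewrite eqr_div // uv mulrC.
Qed.

Lemma det2_point_eq u v : nonzero u -> nonzero v -> point u = point v -> det2 u v = 0.
Proof.
case: u v => [u1 u2] [v1 v2]; rewrite /nonzero /det2 /point /= => nzu nzv.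
case: (eqVneq u2 0) => [->|u20]; case: (eqVneq v2 0) => [->|v20] //=.
- by move=> _; rewrite mulr0 mul0r subrr.
- by case=> /eqP; rewrite eqr_div // => /eqP ->; rewrite mulrC subrr.
Qed.

Lemma det2_coords_point v : nonzero v -> det2 (coords (point v)) v = 0.
Proof.
case: v => [v1 v2]; rewrite /nonzero /point /det2 /=.
case: (eqVneq v2 0) => [->|v20] /= nzv; first by rewrite mulr0 mul0r subrr.
by rewrite mul1r divfK // subrr.
Qed.

Lemma det2_scalev k l u v : det2 (scalev k u) (scalev l v) = k * l * det2 u v.
Proof. rewrite /det2 /scalev /=; ring. Qed.

Lemma nonzero_scalev k v : k != 0 -> nonzero v -> nonzero (scalev k v).
Proof. by move=> k0; rewrite /nonzero /scalev /= !mulf_eq0 (negbTE k0). Qed.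

Lemma point_scalev k v : k != 0 -> nonzero v -> point (scalev k v) = point v.
Proof.
move=> k0 nzv; apply: point_eq => //; first exact: nonzero_scalev.
rewrite /det2 /scalev /=; ring.
Qed.

Lemma scalevA k l v : scalev k (scalev l v) = scalev (k * l) v.
Proof. rewrite /scalev /=; congr pair; ring. Qed.

Lemma scalev_inj v : nonzero v -> injective (scalev^~ v).
Proof. by case: v => v1 v2 /orP[] nzv k l [e1 e2]; apply: (mulIf nzv). Qed.

Lemma linmap_scalev a b c d k v : linmap a b c d (scalev k v) = scalev k (linmap a b c d v).
Proof. rewrite /linmap /scalev /=; congr pair; ring. Qed.

Lemma linmapM a b c d a' b' c' d' v :
  linmap a b c d (linmap a' b' c' d' v) =
  linmap (a * a' + b * c') (a * b' + b * d') (c * a' + d * c') (c * b' + d * d') v.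
Proof. rewrite /linmap /=; congr pair; ring. Qed.

Lemma linmap_adj a b c d v :
  linmap a b c d (linmap d (- b) (- c) a v) = scalev (a * d - b * c) v.
Proof. rewrite /linmap /scalev /=; congr pair; ring. Qed.

Lemma det_linmapM (a b c d a' b' c' d' : C) :
  (a * a' + b * c') * (c * b' + d * d') - (a * b' + b * d') * (c * a' + d * c') =
  (a * d - b * c) * (a' * d' - b' * c').
Proof. ring. Qed.

Lemma det2_linmap a b c d u v :
  det2 (linmap a b c d u) (linmap a b c d v) = (a * d - b * c) * det2 u v.
Proof. rewrite /det2 /linmap /=; ring. Qed.

Lemma nonzero_linmap a b c d v : a * d - b * c != 0 -> nonzero v -> nonzero (linmap a b c d v).
Proof.
case: v => [v1 v2]; rewrite /nonzero /linmap /= => det_neq0; apply: contraLR.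
rewrite negb_or !negbK => /andP [/eqP im1 /eqP im2].
have e1 : (a * d - b * c) * v1 = d * (a * v1 + b * v2) - b * (c * v1 + d * v2) by ring.
have e2 : (a * d - b * c) * v2 = a * (c * v1 + d * v2) - c * (a * v1 + b * v2) by ring.
rewrite im1 im2 !mulr0 subrr in e1 e2.
by move/eqP: e1; move/eqP: e2; rewrite !mulf_eq0 (negbTE det_neq0) => /= -> ->.
Qed.

Lemma mobius_of_point a b c d v : a * d - b * c != 0 -> nonzero v ->
  mobius_of a b c d (point v) = point (linmap a b c d v).
Proof.
move=> det_neq0 nzv; apply: point_eq; try apply: nonzero_linmap => //.
  exact: nonzero_coords.
by rewrite det2_linmap det2_coords_point // mulr0.
Qed.

Lemma size_linear_poly (a b : C) :
  size (a *: 'X + b%:P) = if a != 0 then 2%N else (b != 0 : nat).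
Proof.
rewrite -mul_polyC size_MXaddC polyC_eq0 size_polyC.
by case: (a == 0); case: (b == 0).
Qed.

Lemma coef_linear_poly (a b : C) i :
  (a *: 'X + b%:P)`_i = if i == 0%N then b else if i == 1%N then a else 0.
Proof.
by rewrite coefD coefZ coefX coefC; case: i => [|[|i]] /=; rewrite ?mulr0 ?mulr1 ?add0r ?addr0.
Qed.

Lemma rat_of_linear a b c d : a * d - b * c != 0 ->
  rat_of (a *: 'X + b%:P) (c *: 'X + d%:P) = mobius_of a b c d.
Proof.
move=> det_neq0; apply: funext => -[w|].
  by rewrite /rat_of /mobius_of /point /linmap /= !hornerE.
rewrite /rat_of /mobius_of /point /linmap /= !mulr1 !mulr0 !addr0 lead_coefE.
rewrite !size_linear_poly.
case: (eqVneq c 0) => [c0|c0].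
  have a0 : a != 0 by apply: contraNneq det_neq0 => ->; rewrite c0 !mul0r mulr0 subrr.
  by rewrite a0 c0 /=; case: (d != 0).
by rewrite /= !coef_linear_poly /=; case: (a != 0); case: (b != 0).
Qed.

Lemma mobius_mobius_of a b c d : a * d - b * c != 0 -> mobius (mobius_of a b c d).
Proof. by move=> det_neq0; exists a, b, c, d; rewrite rat_of_linear. Qed.

Lemma mobiusP t : mobius t ->
  exists a b c d, a * d - b * c != 0 /\ t = mobius_of a b c d.
Proof. by case=> a [b [c [d [det_neq0 ->]]]]; exists a, b, c, d; rewrite rat_of_linear. Qed.

Lemma mobius_of_id : mobius_of 1 0 0 1 = id.
Proof.
apply: funext => z; rewrite /mobius_of /linmap !mul1r !mul0r addr0 add0r.
by rewrite -surjective_pairing point_coords.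
Qed.

Lemma det_id_neq0 : 1 * 1 - 0 * 0 != 0 :> C.
Proof. by rewrite mulr1 mulr0 subr0 oner_eq0. Qed.

Lemma mobius_id : mobius (@id (sphere R)).
Proof. by rewrite -mobius_of_id; apply: mobius_mobius_of; exact: det_id_neq0. Qed.

Lemma mobius_ofM a b c d a' b' c' d' : a * d - b * c != 0 -> a' * d' - b' * c' != 0 ->
  mobius_of a b c d \o mobius_of a' b' c' d' =
  mobius_of (a * a' + b * c') (a * b' + b * d') (c * a' + d * c') (c * b' + d * d').
Proof.
move=> det_neq0 det'_neq0; apply: funext => z /=.
rewrite [mobius_of a' _ _ _ z]/mobius_of mobius_of_point // ?linmapM //.
exact/nonzero_linmap/nonzero_coords.
Qed.

End ProjectiveLine.

Section ThreePoints.
Variable R : realType.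
Local Notation C := (R[i]).

Lemma natr_neq_lt (m n : nat) : (m < n)%N -> (m%:R : C) != n%:R.
Proof. by move=> lt_mn; rewrite eqr_nat neq_ltn lt_mn. Qed.

Lemma quadratic_three_roots (a b c t1 t2 t3 : C) :
  t1 != t2 -> t1 != t3 -> t2 != t3 ->
  a * t1 ^+ 2 + b * t1 + c = 0 -> a * t2 ^+ 2 + b * t2 + c = 0 ->
  a * t3 ^+ 2 + b * t3 + c = 0 ->
  [/\ a = 0, b = 0 & c = 0].
Proof.
move=> t12 t13 t23 e1 e2 e3.
have k12 : (t1 - t2) * (a * (t1 + t2) + b) = 0.
  by rewrite -[RHS](subrr 0) -{1}e1 -e2; ring.
have k13 : (t1 - t3) * (a * (t1 + t3) + b) = 0.
  by rewrite -[RHS](subrr 0) -{1}e1 -e3; ring.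
move/eqP: k12; rewrite mulf_eq0 subr_eq0 (negbTE t12) /= => /eqP k12.
move/eqP: k13; rewrite mulf_eq0 subr_eq0 (negbTE t13) /= => /eqP k13.
have : (t2 - t3) * a = 0 by rewrite -[RHS](subrr 0) -{1}k12 -k13; ring.
move/eqP; rewrite mulf_eq0 subr_eq0 (negbTE t23) /= => /eqP a0.
move: k12; rewrite a0 mul0r add0r => b0.
by move: e1; rewrite a0 b0 !mul0r !add0r.
Qed.

Lemma linmap_scalar_of_three_fixed (a b c d t1 t2 t3 : C) :
  t1 != t2 -> t1 != t3 -> t2 != t3 ->
  det2 (linmap a b c d (t1, 1)) (t1, 1) = 0 ->
  det2 (linmap a b c d (t2, 1)) (t2, 1) = 0 ->
  det2 (linmap a b c d (t3, 1)) (t3, 1) = 0 ->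
  [/\ c = 0, b = 0 & a = d].
Proof.
move=> t12 t13 t23.
have fixedE t : det2 (linmap a b c d (t, 1)) (t, 1) = (- c) * t ^+ 2 + (a - d) * t + b.
  by rewrite /det2 /linmap /=; ring.
rewrite !fixedE => e1 e2 e3.
have [c0 ad0 b0] := quadratic_three_roots t12 t13 t23 e1 e2 e3.
split=> //; first by rewrite -[c]opprK c0 oppr0.
by apply/eqP; rewrite -subr_eq0 ad0.
Qed.

Lemma linmap_proportional (a b c d a' b' c' d' t1 t2 t3 : C) :
  a' * d' - b' * c' != 0 -> t1 != t2 -> t1 != t3 -> t2 != t3 ->
  det2 (linmap a b c d (t1, 1)) (linmap a' b' c' d' (t1, 1)) = 0 ->
  det2 (linmap a b c d (t2, 1)) (linmap a' b' c' d' (t2, 1)) = 0 ->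
  det2 (linmap a b c d (t3, 1)) (linmap a' b' c' d' (t3, 1)) = 0 ->
  exists l, forall v, linmap a b c d v = scalev l (linmap a' b' c' d' v).
Proof.
set D := a' * d' - b' * c' => D_neq0 t12 t13 t23 e1 e2 e3.
(* [linmap z00 z01 z10 z11] is the adjugate of the second map composed with the
   first; it fixes the three points, hence is scalar. *)
pose z00 := d' * a - b' * c. pose z01 := d' * b - b' * d.
pose z10 := - c' * a + a' * c. pose z11 := - c' * b + a' * d.
have adjE v : linmap a' b' c' d' (linmap z00 z01 z10 z11 v) = scalev D (linmap a b c d v).
  by rewrite /linmap /scalev /z00 /z01 /z10 /z11 /D /=; congr pair; ring.
have fixedE t : det2 (linmap z00 z01 z10 z11 (t, 1)) (t, 1) =
                det2 (linmap a b c d (t, 1)) (linmap a' b' c' d' (t, 1)).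
  by rewrite /det2 /linmap /z00 /z01 /z10 /z11 /=; ring.
rewrite -!fixedE in e1 e2 e3.
have [z10_0 z01_0 z00_11] := linmap_scalar_of_three_fixed t12 t13 t23 e1 e2 e3.
exists (z00 / D) => v; have := adjE v.
rewrite z10_0 z01_0 -z00_11 /linmap /scalev /= => -[f1 f2].
by congr pair; apply: (mulfI D_neq0); rewrite mulrA mulrCA divff // mulr1;
  [rewrite -f1|rewrite -f2]; ring.
Qed.

Lemma mobius_of_proportional (a b c d a' b' c' d' : C) :
  a * d - b * c != 0 -> a' * d' - b' * c' != 0 ->
  mobius_of a b c d = mobius_of a' b' c' d' ->
  exists l, forall v, linmap a b c d v = scalev l (linmap a' b' c' d' v).
Proof.
move=> det_neq0 det'_neq0 same_map.
have agree n : det2 (linmap a b c d (n%:R, 1)) (linmap a' b' c' d' (n%:R, 1)) = 0.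
  apply: det2_point_eq; try exact/nonzero_linmap/nonzero_pt1.
  by rewrite -!mobius_of_point ?nonzero_pt1 // same_map.
exact: (linmap_proportional det'_neq0 (natr_neq_lt (ltnSn 0))
  (natr_neq_lt (ltnW (ltnSn 1))) (natr_neq_lt (ltnSn 1)) (agree 0%N) (agree 1%N) (agree 2%N)).
Qed.

Lemma mobius_of_agree3 (a b c d a' b' c' d' t1 t2 t3 : C) :
  a * d - b * c != 0 -> a' * d' - b' * c' != 0 -> t1 != t2 -> t1 != t3 -> t2 != t3 ->
  mobius_of a b c d (point (t1, 1)) = mobius_of a' b' c' d' (point (t1, 1)) ->
  mobius_of a b c d (point (t2, 1)) = mobius_of a' b' c' d' (point (t2, 1)) ->
  mobius_of a b c d (point (t3, 1)) = mobius_of a' b' c' d' (point (t3, 1)) ->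
  mobius_of a b c d = mobius_of a' b' c' d'.
Proof.
move=> det_neq0 det'_neq0 t12 t13 t23.
have agreeE t : mobius_of a b c d (point (t, 1)) = mobius_of a' b' c' d' (point (t, 1)) ->
    det2 (linmap a b c d (t, 1)) (linmap a' b' c' d' (t, 1)) = 0.
  move=> e; apply: det2_point_eq; try exact/nonzero_linmap/nonzero_pt1.
  by rewrite -!mobius_of_point ?nonzero_pt1.
move=> /agreeE e1 /agreeE e2 /agreeE e3.
have [l prop] := linmap_proportional det'_neq0 t12 t13 t23 e1 e2 e3.
have l_neq0 : l != 0.
  apply/eqP => l0; have := nonzero_linmap det_neq0 (nonzero_pt1 0).
  by rewrite prop l0 /scalev /nonzero /= !mul0r eqxx.
apply: funext => z; rewrite /mobius_of prop point_scalev //.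
exact/nonzero_linmap/nonzero_coords.
Qed.

Lemma bool_three_of_five (b : nat -> bool) : exists n1 n2 n3,
  [/\ (n1 < n2)%N, (n2 < n3)%N, (n3 < 5)%N & b n2 = b n1 /\ b n3 = b n1].
Proof.
case E0 : (b 0%N); case E1 : (b 1%N); case E2 : (b 2%N); case E3 : (b 3%N); case E4 : (b 4%N);
first [ by exists 0%N, 1%N, 2%N; rewrite E0 E1 E2
      | by exists 0%N, 1%N, 3%N; rewrite E0 E1 E3
      | by exists 0%N, 1%N, 4%N; rewrite E0 E1 E4
      | by exists 0%N, 2%N, 3%N; rewrite E0 E2 E3
      | by exists 0%N, 2%N, 4%N; rewrite E0 E2 E4
      | by exists 0%N, 3%N, 4%N; rewrite E0 E3 E4
      | by exists 1%N, 2%N, 3%N; rewrite E1 E2 E3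
      | by exists 1%N, 2%N, 4%N; rewrite E1 E2 E4
      | by exists 1%N, 3%N, 4%N; rewrite E1 E3 E4
      | by exists 2%N, 3%N, 4%N; rewrite E2 E3 E4 ].
Qed.

End ThreePoints.

Section QuadraticForms.
Variable R : realType.
Local Notation C := (R[i]).

Definition qform (r2 r1 r0 : C) (v : C * C) :=
  r2 * v.1 ^+ 2 + r1 * v.1 * v.2 + r0 * v.2 ^+ 2.

Lemma qform_scalev r2 r1 r0 k v : qform r2 r1 r0 (scalev k v) = k ^+ 2 * qform r2 r1 r0 v.
Proof. rewrite /qform /scalev /=; ring. Qed.

Lemma qform_linmap (r2 r1 r0 a b c d : C) v : qform r2 r1 r0 (linmap a b c d v) =
  qform (qform r2 r1 r0 (a, c))
        (2 * r2 * a * b + r1 * (a * d + b * c) + 2 * r0 * c * d)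
        (qform r2 r1 r0 (b, d)) v.
Proof. rewrite /qform /linmap /=; ring. Qed.

Definition is_qform (g : C * C -> C) := exists r2 r1 r0, forall v, g v = qform r2 r1 r0 v.

Lemma is_qform_linmap g a b c d : is_qform g -> is_qform (g \o linmap a b c d).
Proof.
case=> r2 [r1 [r0 gE]].
by do 3 eexists; move=> v; rewrite /= gE qform_linmap.
Qed.

Lemma is_qform_qform r2 r1 r0 : is_qform (qform r2 r1 r0).
Proof. by exists r2, r1, r0. Qed.

Lemma horner_qform (r : {poly C}) w : (size r <= 3)%N -> r.[w] = qform r`_2 r`_1 r`_0 (w, 1).
Proof.
by move=> size_r; rewrite (horner_coef_wide _ size_r) !big_ord_recr big_ord0 /= /qform /=; ring.
Qed.

(* The only point where algebraic closedness of [C] is used. *)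
Lemma qform_has_zero (r2 r1 r0 : C) : exists v, nonzero v /\ qform r2 r1 r0 v = 0.
Proof.
case: (eqVneq r2 0) => [->|r2_neq0].
  by exists (1, 0); rewrite /nonzero /qform /= oner_eq0; split=> //; ring.
set s := sqrtC (r1 ^+ 2 - 4 * r2 * r0).
exists ((s - r1) / (2 * r2), 1); split; first exact: nonzero_pt1.
have : 4 * r2 * qform r2 r1 r0 ((s - r1) / (2 * r2), 1) = s ^+ 2 - (r1 ^+ 2 - 4 * r2 * r0).
  by rewrite /qform /=; field; rewrite r2_neq0.
by rewrite sqrtCK subrr => /eqP; rewrite !mulf_eq0 pnatr_eq0 (negbTE r2_neq0) => /eqP.
Qed.

End QuadraticForms.

Section QuadraticMap.
Variable R : realType.
Local Notation C := (R[i]).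
Variables p2 p1 p0 q2 q1 q0 : C.

Definition quadmap (v : C * C) := (qform p2 p1 p0 v, qform q2 q1 q0 v).
Definition quad_map (z : sphere R) := point (quadmap (coords z)).

(* [qform jacA (2 * jacB) jacC] is half the Jacobian P_x Q_y - P_y Q_x of the
   two forms; its zeros, the critical points of [quad_map], are the fixed
   points of the involution induced by [quad_J]. *)
Definition jacA := p2 * q1 - p1 * q2.
Definition jacB := p2 * q0 - p0 * q2.
Definition jacC := p1 * q0 - p0 * q1.
Definition disc := jacB ^+ 2 - jacA * jacC.
Definition quad_J := linmap jacB jacC (- jacA) (- jacB).
Definition quad_iota := mobius_of jacB jacC (- jacA) (- jacB).

Lemma det2_quadmap u v : det2 (quadmap u) (quadmap v) = det2 u v * det2 (quad_J u) v.
Proof. rewrite /det2 /quadmap /quad_J /linmap /qform /jacA /jacB /jacC /=; ring. Qed.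

Lemma quad_J_involutive v : quad_J (quad_J v) = scalev disc v.
Proof. rewrite /quad_J /linmap /scalev /disc /=; congr pair; ring. Qed.

Lemma qform_p_J v : qform p2 p1 p0 (quad_J v) = disc * qform p2 p1 p0 v.
Proof. rewrite /qform /quad_J /linmap /disc /jacA /jacB /jacC /=; ring. Qed.

Lemma qform_q_J v : qform q2 q1 q0 (quad_J v) = disc * qform q2 q1 q0 v.
Proof. rewrite /qform /quad_J /linmap /disc /jacA /jacB /jacC /=; ring. Qed.

Lemma qform_jac_J v : qform jacA (2 * jacB) jacC (quad_J v) = - disc * qform jacA (2 * jacB) jacC v.
Proof. rewrite /qform /quad_J /linmap /disc /=; ring. Qed.

Lemma quad_J_scalev k v : quad_J (scalev k v) = scalev k (quad_J v).
Proof. exact: linmap_scalev. Qed.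

Lemma quadmap_scalev k v : quadmap (scalev k v) = scalev (k ^+ 2) (quadmap v).
Proof. by rewrite /quadmap !qform_scalev. Qed.

Lemma quadmap_J v : quadmap (quad_J v) = scalev disc (quadmap v).
Proof. by rewrite /quadmap qform_p_J qform_q_J. Qed.

Lemma det_quad_J : jacB * (- jacB) - jacC * (- jacA) = - disc.
Proof. rewrite /disc; ring. Qed.

Hypothesis quadmap_neq0 : forall v, nonzero v -> nonzero (quadmap v).

Lemma quad_map_point v : nonzero v -> quad_map (point v) = point (quadmap v).
Proof.
move=> nzv; apply: point_eq; try exact/quadmap_neq0/nonzero_coords.
  exact: quadmap_neq0.
by rewrite det2_quadmap det2_coords_point // mul0r.
Qed.

Lemma disc_neq0 : disc != 0.
Proof.
apply/negP => /eqP disc0.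
have [w nzw Jw0] : exists2 w, nonzero w & quad_J w = (0, 0).
  case nzJe: (nonzero (quad_J (1, 0))).
    exists (quad_J (1, 0)); first by rewrite nzJe.
    by rewrite quad_J_involutive disc0 /scalev /= !mul0r.
  exists (1, 0); first by rewrite /nonzero /= oner_eq0.
  move/negbT: nzJe; rewrite /nonzero negb_or !negbK.
  by case: (quad_J _) => a b /= /andP[/eqP -> /eqP ->].
have det0 v : det2 (quadmap w) (quadmap v) = 0.
  by rewrite det2_quadmap Jw0 [det2 (0, 0) v]/det2 /= !mul0r subrr mulr0.
have := quadmap_neq0 nzw; rewrite /nonzero /= => /orP[Pw|Qw].
- have [v [nzv Pv]] := qform_has_zero p2 p1 p0.
  have Qv : qform q2 q1 q0 v = 0.
    by move/eqP: (det0 v); rewrite /det2 /= Pv mulr0 subr0 mulf_eq0 (negbTE Pw) => /eqP.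
  by move: (quadmap_neq0 nzv); rewrite /nonzero /= Pv Qv eqxx.
- have [v [nzv Qv]] := qform_has_zero q2 q1 q0.
  have Pv : qform p2 p1 p0 v = 0.
    move/eqP: (det0 v); rewrite /det2 /= Qv mulr0 sub0r oppr_eq0 mulf_eq0 (negbTE Qw).
    by move/eqP.
  by move: (quadmap_neq0 nzv); rewrite /nonzero /= Pv Qv eqxx.
Qed.

Lemma det_quad_J_neq0 : jacB * (- jacB) - jacC * (- jacA) != 0.
Proof. by rewrite det_quad_J oppr_eq0 disc_neq0. Qed.

Lemma nonzero_quad_J v : nonzero v -> nonzero (quad_J v).
Proof. exact: nonzero_linmap det_quad_J_neq0. Qed.

Lemma quad_iota_point v : nonzero v -> quad_iota (point v) = point (quad_J v).
Proof. exact: mobius_of_point det_quad_J_neq0. Qed.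

Lemma deck_quad_iota : Deck quad_map quad_iota.
Proof.
split; first exact: mobius_mobius_of det_quad_J_neq0.
apply: funext => z /=; have nzz := nonzero_coords z.
rewrite -{1}(point_coords z) quad_iota_point // quad_map_point ?nonzero_quad_J //.
by rewrite quadmap_J point_scalev ?disc_neq0 ?quadmap_neq0.
Qed.

Lemma quad_map_fibre x y : quad_map y = quad_map x -> y = x \/ y = quad_iota x.
Proof.
rewrite -(point_coords x) -(point_coords y) !quad_map_point ?nonzero_coords //.
have [nzx nzy] := (nonzero_coords x, nonzero_coords y).
move/esym/(det2_point_eq (quadmap_neq0 nzx) (quadmap_neq0 nzy)).
rewrite det2_quadmap => /eqP; rewrite mulf_eq0 => /orP[] /eqP e; [left|right].
  exact/esym/point_eq.
by rewrite quad_iota_point //; apply/esym/point_eq => //; apply: nonzero_quad_J.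
Qed.

Lemma quad_map_surj y : exists x, quad_map x = y.
Proof.
pose w := coords y.
have [v [nzv zero_v]] := qform_has_zero (w.2 * p2 - w.1 * q2) (w.2 * p1 - w.1 * q1)
                                         (w.2 * p0 - w.1 * q0).
exists (point v); rewrite quad_map_point // -[y]point_coords.
apply: point_eq; [exact: quadmap_neq0 | exact: nonzero_coords |].
by rewrite -[RHS]zero_v /det2 /quadmap /qform /w /=; ring.
Qed.

Lemma quad_iota_neq_id : quad_iota <> id.
Proof.
rewrite -mobius_of_id => /(mobius_of_proportional det_quad_J_neq0 (det_id_neq0 R)) [l Jl].
have [] := (Jl (1, 0), Jl (0, 1)); rewrite /linmap /scalev /=.
rewrite !(mulr0, mulr1, mul0r, mul1r, addr0, add0r) => -[B_l _] [C0 NB_l].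
have jacB0 : jacB = 0.
  have /eqP : jacB *+ 2 = 0 by rewrite mulr2n {2}B_l -NB_l subrr.
  by rewrite mulrn_eq0 => /eqP.
by move: disc_neq0; rewrite /disc jacB0 C0 mulr0 subr0 expr0n eqxx.
Qed.

Lemma deck_quad_cases t : Deck quad_map t -> t = id \/ t = quad_iota.
Proof.
case=> /mobiusP [a [b [c [d [det_neq0 ->]]]]] deck_t.
pose pt (n : nat) : sphere R := point (n%:R, 1).
have fixed_or_swapped n :
    mobius_of a b c d (pt n) = pt n \/ mobius_of a b c d (pt n) = quad_iota (pt n).
  by apply: quad_map_fibre; have := congr1 (@^~ (pt n)) deck_t.
have [n1 [n2 [n3 [lt12 lt23 _ [b21 b31]]]]] :=
  bool_three_of_five (fun n => mobius_of a b c d (pt n) == pt n).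
have t12 := natr_neq_lt R lt12; have t23 := natr_neq_lt R lt23.
have t13 := natr_neq_lt R (ltn_trans lt12 lt23).
move: b21 b31 => /=; case: (boolP (mobius_of a b c d (pt n1) == pt n1)) => [fix1|nfix1].
  move=> /eqP fix2 /eqP fix3; left; rewrite -mobius_of_id.
  apply: (mobius_of_agree3 det_neq0 (det_id_neq0 R) t12 t13 t23);
  by rewrite mobius_of_id //; apply/eqP.
have swapped n : mobius_of a b c d (pt n) != pt n -> mobius_of a b c d (pt n) = quad_iota (pt n).
  by case: (fixed_or_swapped n) => // ->; rewrite eqxx.
move=> /negbT/swapped swap2 /negbT/swapped swap3; right.
exact: (mobius_of_agree3 det_neq0 det_quad_J_neq0 t12 t13 t23 (swapped _ nfix1) swap2 swap3).
Qed.

Lemma quadmap_not_degenerate : ~ (forall u v, det2 (quadmap u) (quadmap v) = 0).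
Proof.
move=> degenerate; have := degenerate (1, 0) (0, 1); have := degenerate (1, 0) (1, 1).
rewrite !det2_quadmap /det2 /quad_J /linmap /=.
rewrite !(mulr0, mulr1, mul0r, mul1r, addr0, add0r, subr0, opprK) => BA0 B0.
by move: disc_neq0; rewrite /disc B0 add0r in BA0 *; rewrite BA0 mul0r expr0n subrr eqxx.
Qed.

(* The quadratic forms [P], [Q] and half the Jacobian form a basis of the
   binary quadratic forms, on which [quad_J] acts by [disc, disc, - disc]. *)
Lemma eigenform_span g : is_qform g -> (forall u, g (quad_J u) = disc * g u) ->
  exists a b, forall u, g u = a * qform p2 p1 p0 u + b * qform q2 q1 q0 u.
Proof.
case=> r2 [r1 [r0 gE]] g_eigen.
pose det3 (a2 a1 a0 b2 b1 b0 c2 c1 c0 : C) :=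
  a2 * (b1 * c0 - c1 * b0) - b2 * (a1 * c0 - c1 * a0) + c2 * (a1 * b0 - b1 * a0).
pose D := det3 p2 p1 p0 q2 q1 q0 jacA (2 * jacB) jacC.
pose al := det3 r2 r1 r0 q2 q1 q0 jacA (2 * jacB) jacC.
pose be := det3 p2 p1 p0 r2 r1 r0 jacA (2 * jacB) jacC.
pose ga := det3 p2 p1 p0 q2 q1 q0 r2 r1 r0.
have cramer u : D * g u = al * qform p2 p1 p0 u + be * qform q2 q1 q0 u
                          + ga * qform jacA (2 * jacB) jacC u.
  by rewrite gE /D /al /be /ga /det3 /qform; ring.
have two_neq0 : (2 : C) != 0 by rewrite pnatr_eq0.
have D_neq0 : D != 0.
  have -> : D = - 2 * disc by rewrite /D /det3 /disc /jacA /jacB /jacC; ring.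
  by rewrite mulNr oppr_eq0 mulf_neq0 // disc_neq0.
have ga_jac u : ga * qform jacA (2 * jacB) jacC u = 0.
  have e1 := cramer (quad_J u); rewrite g_eigen qform_p_J qform_q_J qform_jac_J in e1.
  have : 2 * disc * (ga * qform jacA (2 * jacB) jacC u) = 0.
    transitivity (disc * (D * g u) - D * (disc * g u)); last by ring.
    by rewrite e1 cramer; ring.
  by move/eqP; rewrite mulf_eq0 mulf_eq0 (negbTE two_neq0) (negbTE disc_neq0) => /eqP.
have ga0 : ga = 0.
  case: (eqVneq ga 0) => // ga_neq0; exfalso.
  have jac0 u : qform jacA (2 * jacB) jacC u = 0.
    by move/eqP: (ga_jac u); rewrite mulf_eq0 (negbTE ga_neq0) => /eqP.
  have := (jac0 (1, 0), jac0 (0, 1), jac0 (1, 1)); rewrite /qform /=.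
  rewrite !(expr2, mulr0, mulr1, mul0r, mul1r, addr0, add0r) => -[[A0 C0]].
  rewrite A0 C0 add0r addr0 => /eqP; rewrite mulf_eq0 (negbTE two_neq0) => /eqP B0.
  by move: disc_neq0; rewrite /disc A0 B0 mul0r expr0n subrr eqxx.
exists (al / D), (be / D) => u.
by apply: (mulfI D_neq0); rewrite cramer ga0 mul0r addr0; field.
Qed.

Lemma commute_quad_iota (s00 s01 s10 s11 : C) : s00 * s11 - s01 * s10 != 0 ->
  mobius_of s00 s01 s10 s11 \o quad_iota = quad_iota \o mobius_of s00 s01 s10 s11 ->
  exists l, l ^+ 2 = 1 /\
    forall v, linmap s00 s01 s10 s11 (quad_J v) = scalev l (quad_J (linmap s00 s01 s10 s11 v)).
Proof.
move=> detS comm; rewrite /quad_iota !mobius_ofM ?det_quad_J_neq0 // in comm.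
have [||l SJ_JS] := mobius_of_proportional _ _ comm; try
  by rewrite det_linmapM mulf_neq0 ?det_quad_J_neq0.
have SJ v : linmap s00 s01 s10 s11 (quad_J v) = scalev l (quad_J (linmap s00 s01 s10 s11 v)).
  by rewrite /quad_J !linmapM SJ_JS.
exists l; split=> //.
have nzSe := nonzero_linmap detS (nonzero_pt1 0).
apply: (mulIf disc_neq0); rewrite mul1r; apply: (scalev_inj nzSe).
have := SJ (quad_J (0, 1)); rewrite quad_J_involutive linmap_scalev SJ quad_J_scalev.
by rewrite quad_J_involutive !scalevA -expr2 => ->.
Qed.

Lemma quad_descent s : mobius s -> s \o quad_iota = quad_iota \o s ->
  exists m, mobius m /\ quad_map \o s = m \o quad_map.
Proof.
move=> /mobiusP [s00 [s01 [s10 [s11 [detS ->]]]]] /(commute_quad_iota detS) [l [l2 SJ]].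
have pullback g : is_qform g -> (forall v, g (quad_J v) = disc * g v) ->
    exists a b, forall u, g (linmap s00 s01 s10 s11 u) =
                          a * qform p2 p1 p0 u + b * qform q2 q1 q0 u.
  move=> g_qform g_eigen; apply: eigenform_span; first exact: is_qform_linmap.
  case: g_qform g_eigen => r2 [r1 [r0 gE]] g_eigen u /=.
  by rewrite SJ gE qform_scalev l2 mul1r -gE g_eigen.
have [aP [bP PS]] := pullback _ (is_qform_qform p2 p1 p0) qform_p_J.
have [aQ [bQ QS]] := pullback _ (is_qform_qform q2 q1 q0) qform_q_J.
have FS u : quadmap (linmap s00 s01 s10 s11 u) = linmap aP bP aQ bQ (quadmap u).
  by rewrite /quadmap /linmap /= PS QS.
have detK : aP * bQ - bP * aQ != 0.
  apply/eqP => detK0; apply: quadmap_not_degenerate => u v.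
  have := det2_linmap aP bP aQ bQ (quadmap (linmap s11 (- s01) (- s10) s00 u))
                                  (quadmap (linmap s11 (- s01) (- s10) s00 v)).
  rewrite -!FS !linmap_adj !quadmap_scalev det2_scalev detK0 mul0r => /eqP.
  by rewrite !mulf_eq0 (negbTE detS) => /eqP.
exists (mobius_of aP bP aQ bQ); split; first exact: mobius_mobius_of.
apply: funext => z /=; have nzz := nonzero_coords z.
rewrite [mobius_of s00 _ _ _ z]/mobius_of quad_map_point ?nonzero_linmap // FS.
by rewrite -mobius_of_point ?quadmap_neq0.
Qed.

End QuadraticMap.

Section QuadraticRationalMap.
Variable R : realType.
Local Notation C := (R[i]).
Variables p q : {poly C}.
Hypothesis size_pq : maxn (size p) (size q) = 3%N.
Hypothesis coprime_pq : coprimep p q.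

Let size_p : (size p <= 3)%N. Proof. by rewrite -size_pq leq_maxl. Qed.
Let size_q : (size q <= 3)%N. Proof. by rewrite -size_pq leq_maxr. Qed.

Lemma rat_of_quad_map : rat_of p q = quad_map p`_2 p`_1 p`_0 q`_2 q`_1 q`_0.
Proof.
apply: funext => -[w|].
  by rewrite /rat_of /quad_map /quadmap /point /= -!horner_qform.
rewrite /rat_of /quad_map /quadmap /point /qform /=.
rewrite !(expr2, mulr0, mulr1, mul0r, addr0).
case: ltnP => [lt_qp|le_pq].
  suff -> : q`_2 = 0 by rewrite eqxx.
  apply: nth_default; move: size_pq; rewrite (maxn_idPl (ltnW lt_qp)) => sp3.
  by rewrite -ltnS -sp3.
have sq3 : size q = 3%N by move: size_pq; rewrite (maxn_idPr le_pq).
have : lead_coef q != 0 by rewrite lead_coef_eq0 -size_poly_eq0 sq3.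
by rewrite lead_coefE sq3 => ->.
Qed.

Lemma quadmap_neq0_coprime v : nonzero v -> nonzero (quadmap p`_2 p`_1 p`_0 q`_2 q`_1 q`_0 v).
Proof.
case: v => [v1 v2]; rewrite /nonzero /quadmap /=; case: (eqVneq v2 0) => [->|v2_neq0] nzv.
  rewrite /qform /= !(expr2, mulr0, addr0); rewrite orbF in nzv.
  rewrite !mulf_eq0 (negbTE nzv) !orbF.
  have : (size p == 3%N) || (size q == 3%N).
    by move: size_pq; rewrite /maxn; case: ltnP => _ ->; rewrite eqxx ?orbT.
  case/orP => /eqP size3; [apply/orP; left | apply/orP; right].
    by have := lead_coef_eq0 p; rewrite lead_coefE size3 -size_poly_eq0 size3 => ->.
  by have := lead_coef_eq0 q; rewrite lead_coefE size3 -size_poly_eq0 size3 => ->.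
have scaleE (r : {poly C}) :
    (size r <= 3)%N -> qform r`_2 r`_1 r`_0 (v1, v2) = v2 ^+ 2 * r.[v1 / v2].
  by move=> size_r; rewrite horner_qform // /qform /=; field.
rewrite !scaleE // !mulf_eq0 (negbTE v2_neq0) /=.
case: (eqVneq p.[v1 / v2] 0) => //= p_root.
by apply: (coprimep_root coprime_pq); rewrite /root p_root.
Qed.

End QuadraticRationalMap.

Lemma klein4_cases (s i m : ('Z_2 * 'Z_2)%type) : i != 0 -> m != 0 -> m != i ->
  [\/ s = 0, s = i, s = m | s = i + m].
Proof.
have Z2_cases (x : 'Z_2) : x = 0 \/ x = 1.
  by case: x => -[|[|n]] lt_x2; [left|right|]; try apply: val_inj.
have pair_cases (x : ('Z_2 * 'Z_2)%type) :
    [\/ x = (0, 0), x = (1, 0), x = (0, 1) | x = (1, 1)].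
  case: x => a b; case: (Z2_cases a) => ->; case: (Z2_cases b) => ->;
  by [apply: Or41 | apply: Or43 | apply: Or42 | apply: Or44].
have : (i != 0) ==> (m != 0) ==> (m != i) ==> [|| s == 0, s == i, s == m | s == i + m].
  by case: (pair_cases s) => ->; case: (pair_cases i) => ->; case: (pair_cases m) => ->;
    vm_compute.
move=> + i0 m0 mi; rewrite i0 m0 mi => /or4P.
by case=> /eqP ->; [apply: Or41 | apply: Or42 | apply: Or43 | apply: Or44].
Qed.

Section DeckIterates.
Variable R : realType.
Variables f iota : sphere R -> sphere R.
Hypothesis f_surj : forall y, exists x, f x = y.
Hypothesis deck_iota : Deck f iota.
Hypothesis iota_neq_id : iota <> id.
Hypothesis deck_f_cases : forall t, Deck f t -> t = id \/ t = iota.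
Hypothesis descent : forall s, mobius s -> s \o iota = iota \o s ->
  exists m, mobius m /\ f \o s = m \o f.

Lemma iter_surj k y : exists x, iter k f x = y.
Proof.
elim: k y => [|k IHk] y; first by exists y.
by have [x <-] := f_surj y; have [z <-] := IHk x; exists z.
Qed.

Lemma id_of_comp_surj (g m : sphere R -> sphere R) :
  (forall y, exists x, g x = y) -> m \o g = g -> m = id.
Proof.
move=> g_surj mg; apply: funext => y; have [x <-] := g_surj y.
by have /= := congr1 (@^~ x) mg.
Qed.

Lemma deck_iter_mono j k t : (j <= k)%N -> Deck (iter j f) t -> Deck (iter k f) t.
Proof.
move=> /subnK <-; elim: (k - j)%N => [|n IHn] //= deck_t.
case: (IHn deck_t) => t_mob t_deck; split=> //; rewrite addSn.
by apply: funext => x /=; rewrite -[in RHS]t_deck.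
Qed.

Lemma not_deck_klein4 : ~ deck_klein4 f.
Proof.
case=> phi [phi_inj phi_deck _ _].
have [e1|e1] := deck_f_cases (phi_deck (0, 0)); have [e2|e2] := deck_f_cases (phi_deck (1, 0));
  have [e3|e3] := deck_f_cases (phi_deck (0, 1));
  by [move: (phi_inj _ _ (etrans e1 (esym e2))) | move: (phi_inj _ _ (etrans e1 (esym e3)))
     | move: (phi_inj _ _ (etrans e2 (esym e3)))].
Qed.

Lemma deck_iter_descend k s mu : Deck (iter k.+1 f) s -> mobius mu -> f \o s = mu \o f ->
  Deck (iter k f) mu.
Proof.
move=> [_ deck_s] mob_mu desc; split=> //; apply: funext => y /=.
have [x <-] := f_surj y.
have : iter k.+1 f (s x) = iter k.+1 f x by exact: (congr1 (@^~ x) deck_s).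
by rewrite !iterSr; have /= <- := congr1 (@^~ x) desc.
Qed.

Lemma commuting_deck_id k m : Deck (iter k f) m -> f \o m = m \o f -> m = id.
Proof.
move=> [_ deck_m] fm; apply: (id_of_comp_surj (iter_surj k)).
suff <- : iter k f \o m = m \o iter k f by [].
elim: k {deck_m} => [|k IHk] //; apply: funext => x /=.
by have /= -> := congr1 (@^~ x) IHk; have /= := congr1 (@^~ (iter k f x)) fm.
Qed.

Section Klein4.
Variable k : nat.
Hypothesis k_ge2 : (2 <= k)%N.
Variable phi : ('Z_2 * 'Z_2)%type -> sphere R -> sphere R.
Hypothesis phi_inj : injective phi.
Hypothesis phi_deck : forall g, Deck (iter k f) (phi g).
Hypothesis phi_onto : forall t, Deck (iter k f) t -> exists g, phi g = t.
Hypothesis phiD : forall g h, phi (g + h) = phi g \o phi h.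

Lemma phi0 : phi 0 = id.
Proof.
have [e phi_e] := phi_onto (conj (mobius_id R) erefl : Deck (iter k f) id).
have e0 : e = 0 by apply: (addrI e); rewrite addr0; apply: phi_inj; rewrite phiD phi_e.
by rewrite -e0.
Qed.

Lemma phi_iota : exists2 i, i != 0 & phi i = iota.
Proof.
have [i phi_i] := phi_onto (deck_iter_mono (ltnW k_ge2) deck_iota).
by exists i => //; apply: contra_not_neq iota_neq_id => i0; rewrite -phi_i i0 phi0.
Qed.

Lemma descendant_cases s mu : f \o phi s = mu \o f -> Deck (iter k f) mu -> mu = id \/ mu = iota.
Proof.
move=> desc deck_mu; have [i i_neq0 phi_i] := phi_iota.
have [m phi_m] := phi_onto deck_mu.
case: (eqVneq m 0) => [m0|m_neq0]; first by left; rewrite -phi_m m0 phi0.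
case: (eqVneq m i) => [mi|m_neq_i]; first by right; rewrite -phi_m mi.
left; case: (klein4_cases s i_neq0 m_neq0 m_neq_i) desc => -> desc.
- by apply: (id_of_comp_surj f_surj); rewrite -desc phi0.
- by apply: (id_of_comp_surj f_surj); rewrite -desc phi_i; case: deck_iota.
- by apply: (commuting_deck_id deck_mu); rewrite -desc phi_m.
- apply: (commuting_deck_id deck_mu); rewrite -desc phiD phi_i phi_m.
  by case: deck_iota => _ f_iota; rewrite compA f_iota.
Qed.

Lemma deck_iter2_phi s : Deck (iter 2 f) (phi s).
Proof.
have [i _ phi_i] := phi_iota; have [mob_s deck_s] := phi_deck s.
have [mu [mob_mu desc]] : exists mu, mobius mu /\ f \o phi s = mu \o f.
  by apply: descent => //; rewrite -phi_i -!phiD addrC.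
have k_eq : k = k.-1.+1 by rewrite prednK // ltnW.
have deck_mu : Deck (iter k f) mu.
  apply: (deck_iter_mono (leq_pred k)); apply: (deck_iter_descend _ mob_mu desc).
  by rewrite -k_eq.
split=> //; apply: funext => x /=; have /= -> := congr1 (@^~ x) desc.
case: (descendant_cases desc deck_mu) => -> //.
by case: deck_iota => _ /(congr1 (@^~ (f x))).
Qed.

End Klein4.

Lemma deck_klein4_iter2 k : (0 < k)%N -> deck_klein4 (iter k f) -> deck_klein4 (iter 2 f).
Proof.
move=> k_gt0 klein_k; have k_ge2 : (2 <= k)%N.
  by case: k k_gt0 klein_k => [|[|k]] // _ /not_deck_klein4.
case: klein_k => phi [phi_inj phi_deck phi_onto phiD].
exists phi; split=> // [g|t deck_t]; first exact: (deck_iter2_phi k_ge2).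
by apply: phi_onto; apply: deck_iter_mono deck_t.
Qed.

End DeckIterates.

Theorem mainTheorem11 (R : realType) (f : sphere R -> sphere R) :
  quadratic_rational_map f ->
  (exists k : nat, (0 < k)%N /\ deck_klein4 (iter k f)) ->
  deck_klein4 (iter 2 f) /\
  (forall k : nat, (0 < k)%N -> deck_klein4 (iter k f) -> (2 <= k)%N).
Proof.
case=> p [q [coprime_pq size_pq ->]] [k [k_gt0 klein_k]].
have F_neq0 := quadmap_neq0_coprime size_pq coprime_pq.
rewrite (rat_of_quad_map size_pq) in klein_k *.
have not_klein4 := not_deck_klein4 (deck_quad_cases F_neq0).
split.
  exact: (deck_klein4_iter2 (quad_map_surj F_neq0) (deck_quad_iota F_neq0)
    (quad_iota_neq_id F_neq0) (deck_quad_cases F_neq0) (quad_descent F_neq0) k_gt0 klein_k).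
by move=> [|[|n]] // _ /not_klein4.
Qed.
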